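(* For every integer $k\ge 2$ and every $n\ge 0$, the number of edges of the $k$-Pell graph $\Pi_{n,k}$ is $$|E(\Pi_{n,k})|=\sum_{i=0}^{n}F_{i,k}\left(F_{n-i+2,k}-F_{n-i+1,k}\right).$$
   Context: For a positive integer $k$, the $k$-Fibonacci numbers are defined by $F_{0,k}=0$, $F_{1,k}=1$ and $F_{n,k}=kF_{n-1,k}+F_{n-2,k}$ for $n\ge 2$. For an integer $k\ge 2$, a $k$-Pell string is a finite word over the alphabet $\{0,1,\ldots,k-1,kk\}$, i.e. a word over $\{0,1,\ldots,k\}$ in which every maximal run of the letter $k$ has even length. For $n\ge 0$, the $k$-Pell graph $\Pi_{n,k}$ has as vertices all $k$-Pell strings of length $n$, and two vertices are adjacent if one is obtained from the other either by replacing a single letter $i$ by $i+1$ (or vice versa) for some $i\in\{0,1,\ldots,k-2\}$, or by replacing one factor $(k-1)(k-1)$ by $kk$ (or vice versa), in such a way that the resulting string is again a $k$-Pell string. *)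

From mathcomp Require Import all_boot.
Set Implicit Arguments. Unset Strict Implicit. Unset Printing Implicit Defensive.

Fixpoint kfib (k n : nat) : nat :=
  match n with
  | 0 => 0
  | 1 => 1
  | (n'.+1) as m => k * kfib k n' + (if n' is n''.+1 then kfib k n'' else 0)
  end.

(* A word over {0,...,k} is a k-Pell string iff it is a concatenation of
   letters 0,...,k-1 and the two-letter block kk. *)
Fixpoint is_pell (k : nat) (s : seq nat) : bool :=
  match s with
  | [::] => true
  | x :: s' =>
      if x < k then is_pell k s'
      else if x == k then
        (match s' with
         | y :: s'' => (y == k) && is_pell k s''
         | [::] => false
         end)
      else false
  end.

Definition letter_move (k : nat) (s t : seq nat) : bool :=
  (size s == size t) &&
  [exists i : 'I_(size s),
     [&& [forall j : 'I_(size s), (j != i) ==> (nth 0 s j == nth 0 t j)],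
         (nth 0 s i < k) , (nth 0 t i < k) &
         ((nth 0 s i == (nth 0 t i).+1) || (nth 0 t i == (nth 0 s i).+1))]].

Definition block_move1 (k : nat) (s t : seq nat) : bool :=
  (size s == size t) &&
  [exists i : 'I_(size s),
     [&& i.+1 < size s,
         [forall j : 'I_(size s),
            ((j != i) && (j != i.+1 :> nat)) ==> (nth 0 s j == nth 0 t j)],
         nth 0 s i == k.-1, nth 0 s i.+1 == k.-1,
         nth 0 t i == k & nth 0 t i.+1 == k]].

Definition pell_adj (k : nat) (s t : seq nat) : bool :=
  [&& is_pell k s, is_pell k t &
     [|| letter_move k s t, block_move1 k s t | block_move1 k t s]].

Definition pell_word (k n : nat) (w : n.-tuple 'I_k.+1) : seq nat :=
  map (@nat_of_ord _) w.

Definition pell_vertices (k n : nat) : {set n.-tuple 'I_k.+1} :=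
  [set w | is_pell k (pell_word w)].

Definition pell_edges (k n : nat) : {set {set n.-tuple 'I_k.+1}} :=
  [set [set x; y] | x in pell_vertices k n, y in pell_vertices k n
                  & pell_adj k (pell_word x) (pell_word y)].

(* Orient every edge of the k-Pell graph towards the endpoint with the larger
   letter sum.  An upward move raises one letter j < k-1 to j+1 or replaces a
   factor (k-1)(k-1) by kk, so |E(Pi_{n,k})| is the number E_n of upward moves
   out of the k-Pell strings of length n, of which there are F_{n+1}.  Sorting
   the strings of length n+2 by their first block (a letter a < k, or kk) gives
     E_{n+2} = k E_{n+1} + E_n + (k-1) F_{n+2} + F_{n+1},
   where the last two terms count the moves raising a first letter a < k-1 and
   the block moves on a prefix (k-1)(k-1).  Since F_0 = 0 and F_1 = 1, the
   convolution sum_i F_i b_{n-i} with b_m = F_{m+2} - F_{m+1}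
   = (k-1) F_{m+1} + F_m satisfies the same recurrence, and both sequences
   start with 0 and k-1. *)

From mathcomp Require Import all_boot zify.
Set Implicit Arguments. Unset Strict Implicit. Unset Printing Implicit Defensive.

Lemma exists_ord_recl n (P : pred 'I_n.+1) :
  [exists i, P i] = P ord0 || [exists i : 'I_n, P (lift ord0 i)].
Proof.
apply/existsP/orP => [[i Pi]|[P0|/existsP[i Pi]]]; last 2 first.
- by exists ord0.
- by exists (lift ord0 i).
by case: (unliftP ord0 i) Pi => [j ->|->]; [right; apply/existsP; exists j|left].
Qed.

Lemma forall_ord_recl n (P : pred 'I_n.+1) :
  [forall i, P i] = P ord0 && [forall i : 'I_n, P (lift ord0 i)].
Proof.
apply/negb_inj; rewrite negb_and !negb_forall exists_ord_recl.
by congr (_ || _); apply: eq_existsb.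
Qed.

Lemma forall_nth_eq (T : eqType) (x0 : T) (s t : seq T) : size s = size t ->
  [forall i : 'I_(size s), nth x0 s i == nth x0 t i] = (s == t).
Proof.
move=> st; apply/forallP/eqP => [eq_st|-> //].
by apply: (eq_from_nth (x0 := x0)) st _ => i lt_i; apply/eqP/(eq_st (Ordinal lt_i)).
Qed.

Lemma mem_map_cons (T : eqType) (a : T) (L : seq (seq T)) u :
  (u \in [seq a :: v | v <- L]) = if u is b :: v then (b == a) && (v \in L) else false.
Proof.
apply/mapP/idP => [[v vL ->]|]; first by rewrite eqxx.
by case: u => // b v /andP[/eqP -> vL]; exists v.
Qed.

Lemma mem_map_cons2 (T : eqType) (a b : T) (L : seq (seq T)) u :
  (u \in [seq [:: a, b & w] | w <- L]) =
  if u is c :: v then (c == a) && (v \in [seq b :: w | w <- L]) else false.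
Proof. by rewrite -mem_map_cons -map_comp. Qed.

Lemma mem_allpairs_cons (T : eqType) (A : seq T) (L : seq (seq T)) u :
  (u \in [seq a :: w | a <- A, w <- L]) =
  if u is a :: w then (a \in A) && (w \in L) else false.
Proof.
apply/allpairsP/idP => [[[a w] /= [aA wL ->]]|]; first by rewrite aA wL.
by case: u => // a w /andP[aA wL]; exists (a, w).
Qed.

Lemma kfibSS k n : kfib k n.+2 = k * kfib k n.+1 + kfib k n.
Proof. by case: n. Qed.

Section Moves.
Variable k : nat.

Definition adjacent_letters (x y : nat) : bool :=
  [&& x < k, y < k & (x == y.+1) || (y == x.+1)].

Definition raise_head (s t : seq nat) : bool :=
  if s is c :: r then (c == k.-1) && (t == k :: r) else false.

Lemma letter_move_cons a b s t :
  letter_move k (a :: s) (b :: t) =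
  (a == b) && letter_move k s t || adjacent_letters a b && (s == t).
Proof.
rewrite /letter_move /= eqSS; have [st|ne] := eqVneq (size s) (size t); last first.
  by rewrite /= andbF; case: (eqVneq s t) ne => [->|]; rewrite ?eqxx ?andbF.
rewrite /= exists_ord_recl orbC forall_ord_recl /=.
under eq_forallb => j do rewrite add0n.
rewrite forall_nth_eq // andbC.
under eq_existsb => i do rewrite forall_ord_recl /= !add0n.
under eq_existsb => i do under eq_forallb => j do rewrite (inj_eq lift_inj) /= add0n.
rewrite /adjacent_letters -!andbA; congr (_ || _).
by case: eqP => //= _; apply/existsP => -[].
Qed.

Lemma block_move1_cons a b s t :
  block_move1 k (a :: s) (b :: t) =
  (a == b) && block_move1 k s t || [&& a == k.-1, b == k & raise_head s t].
Proof.
rewrite /block_move1 /= eqSS; have [st|ne] := eqVneq (size s) (size t); last first.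
  rewrite /= !andbF /=; apply/esym/negbTE; apply: contra ne => /and3P[_ _].
  by case: s => [|c s] //= /andP[_ /eqP ->].
rewrite /= exists_ord_recl orbC forall_ord_recl.
under eq_existsb => i do rewrite forall_ord_recl.
under eq_existsb => i do under eq_forallb => j do rewrite (inj_eq lift_inj) !lift0 eqSS.
under eq_existsb => i do rewrite !lift0 /=.
rewrite -!andbA; congr (_ || _).
  case: (a == b); last by apply/existsP => -[i /and3P[]].
  by apply: eq_existsb => i; rewrite ltnS.
rewrite /raise_head; case: s st => [|c s] /=; first by rewrite !andbF.
case: t => [|d t] //= [st]; rewrite forall_ord_recl /=.
under eq_forallb => j do rewrite add0n.
rewrite forall_nth_eq // eqseq_cons (eq_sym t).
by case: (s == t); case: (a == k.-1); case: (b == k); case: (c == k.-1); case: (d == k).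
Qed.

Fixpoint letter_up (s t : seq nat) : bool :=
  match s, t with
  | a :: s', b :: t' => (a == b) && letter_up s' t' || [&& b == a.+1, b < k & s' == t']
  | _, _ => false
  end.

Fixpoint block_up (s t : seq nat) : bool :=
  match s, t with
  | a :: s', b :: t' =>
      (a == b) && block_up s' t' || [&& a == k.-1, b == k & raise_head s' t']
  | _, _ => false
  end.

Definition pell_up (s t : seq nat) : bool := letter_up s t || block_up s t.

Lemma adjacent_lettersE a b :
  adjacent_letters a b = [&& b == a.+1 & b < k] || [&& a == b.+1 & a < k].
Proof. by rewrite /adjacent_letters; apply/idP/idP; lia. Qed.

Lemma letter_move_up s t : letter_move k s t = letter_up s t || letter_up t s.
Proof.
elim: s t => [|a s IH] [|b t] /=.
1,2: by rewrite /letter_move; case: existsP => // -[[]].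
- by rewrite /letter_move.
rewrite letter_move_cons IH adjacent_lettersE andb_orr andb_orl orbACA.
by rewrite -!andbA (eq_sym b a) (eq_sym t s).
Qed.

Lemma block_move1_up s t : block_move1 k s t = block_up s t.
Proof.
elim: s t => [|a s IH] [|b t] /=.
1,2: by rewrite /block_move1; case: existsP => // -[[]].
- by rewrite /block_move1.
by rewrite block_move1_cons IH.
Qed.

Lemma pell_adj_up s t :
  pell_adj k s t = [&& is_pell k s, is_pell k t & pell_up s t || pell_up t s].
Proof. by rewrite /pell_adj letter_move_up !block_move1_up /pell_up orbACA. Qed.
End Moves.

Section PellStrings.
Variable k : nat.
Hypothesis k_gt0 : 0 < k.

Let k_neq_pred : (k == k.-1) = false. Proof. by rewrite gtn_eqF // ltn_predL. Qed.

Definition starts_with (c : nat) (s : seq nat) : bool :=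
  if s is a :: _ then a == c else false.

Lemma pell_up_cons a b s t :
  pell_up k (a :: s) (b :: t) =
  (a == b) && pell_up k s t || [&& b == a.+1, b < k & s == t]
  || [&& a == k.-1, b == k & raise_head k s t].
Proof. by rewrite /pell_up /= andb_orr orbACA orbA. Qed.

Lemma raise_headE s t :
  raise_head k s t = starts_with k.-1 s && (t == k :: behead s).
Proof. by case: s. Qed.

Lemma pell_up_size s t : pell_up k s t -> size s = size t.
Proof.
elim: s t => [|a s IH] [|b t] //; rewrite pell_up_cons.
case/orP => [/orP[/andP[_ /IH /= ->] | /and3P[_ _ /eqP /= ->]] //|/and3P[_ _]].
by case: s {IH} => [|c s] //= /andP[_ /eqP ->].
Qed.

Lemma pell_up_sumn s t : pell_up k s t -> sumn s < sumn t.
Proof.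
elim: s t => [|a s IH] [|b t] //; rewrite pell_up_cons /=.
case/orP => [/orP[/andP[/eqP -> /IH] | /and3P[/eqP -> _ /eqP ->]] |].
- by rewrite ltn_add2l.
- by rewrite ltn_add2r.
case/and3P=> /eqP -> /eqP ->.
by case: s {IH} => [|c s] //= /andP[/eqP -> /eqP ->] /=; lia.
Qed.

Lemma pell_up_irr s : pell_up k s s = false.
Proof. by apply/negP => /pell_up_sumn; rewrite ltnn. Qed.

Lemma pell_up_asym s t : pell_up k s t -> pell_up k t s = false.
Proof. by move=> /pell_up_sumn st; apply/negP => /pell_up_sumn; lia. Qed.

Lemma is_pell_ind (P : seq nat -> Prop) :
  P [::] ->
  (forall a s, a < k -> is_pell k s -> P s -> P (a :: s)) ->
  (forall s, is_pell k s -> P s -> P [:: k, k & s]) ->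
  forall s, is_pell k s -> P s.
Proof.
move=> P0 Pcons Pkk s; elim: {s}(size s).+1 {-2}s (ltnSn (size s)) => // n IH [|a s] //=.
rewrite ltnS => s_le; case: ltnP => [lt_a ps|_]; first by apply: Pcons => //; apply: IH.
case: eqP => // ->; case: s s_le => // b s /= s_le /andP[/eqP -> ps].
by apply: Pkk => //; apply: IH => //; apply: leq_trans s_le.
Qed.

Lemma pell_up_consk s b t : pell_up k (k :: s) (b :: t) = (b == k) && pell_up k s t.
Proof.
rewrite pell_up_cons eq_sym k_neq_pred /= orbF.
case: eqP => [->|_] /=; first by rewrite ltnn andbF orbF.
by case: eqP => // ->; rewrite ltnNge leqnSn.
Qed.

Lemma pell_up_is_pell s t : is_pell k s -> pell_up k s t -> is_pell k t.
Proof.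
move=> ps; move: t; elim/is_pell_ind: s / ps => [|a s lt_a ps IH|s ps IH] [|b t] //.
  rewrite pell_up_cons => /orP[/orP[/andP[/eqP <- /IH] | /and3P[/eqP -> lt_b /eqP <-]] |].
  - by rewrite /= lt_a.
  - by rewrite /= lt_b.
  case/and3P=> _ /eqP ->.
  case: s ps {IH} => [|c s] //= ps /andP[/eqP c_eq /eqP ->].
  by move: ps; rewrite /= c_eq ltnn eqxx -ltnS (ltn_predK k_gt0) ltnSn.
rewrite pell_up_consk => /andP[/eqP -> ]; case: t => [|d t] //.
by rewrite pell_up_consk => /andP[/eqP -> /IH]; rewrite /= ltnn eqxx.
Qed.

Lemma pell_letters_le s : is_pell k s -> all (fun x => x <= k) s.
Proof.
by move=> ps; elim/is_pell_ind: s / ps => [|a s /ltnW a_le _ IH|s _ IH] //=;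
  rewrite ?a_le ?IH ?leqnn.
Qed.

Fixpoint up_moves (s : seq nat) : seq (seq nat) :=
  if s is a :: s' then
    [seq a :: t | t <- up_moves s'] ++ nseq (a.+1 < k) (a.+1 :: s')
    ++ nseq ((a == k.-1) && starts_with k.-1 s') [:: k, k & behead s']
  else [::].

Lemma size_up_moves_cons a s :
  size (up_moves (a :: s)) =
  size (up_moves s) + (a.+1 < k) + ((a == k.-1) && starts_with k.-1 s).
Proof. by rewrite /= !size_cat size_map !size_nseq addnA. Qed.

Lemma mem_up_moves s t : (t \in up_moves s) = pell_up k s t.
Proof.
elim: s t => [|a s IH] [|b t] //=; rewrite !mem_cat mem_map_cons !mem_nseq !lt0b.
  by rewrite !andbF.
rewrite IH pell_up_cons raise_headE !eqseq_cons eq_sym (eq_sym t) -!andbA.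
rewrite orbA; congr (_ || _ || _); last by congr (_ && _); apply: andbCA.
by case: eqP => [->|_]; rewrite ?andbF.
Qed.

Lemma uniq_up_moves s : uniq (up_moves s).
Proof.
elim: s => [|a s IH] //=.
rewrite !cat_uniq map_inj_uniq ?IH; last by move=> u v [].
rewrite has_cat !has_nseq /= !mem_map_cons mem_nseq eqseq_cons.
rewrite (gtn_eqF (ltnSn a)) !lt0b andbF /=.
case: eqP => [->|_]; last by case: (_ < k).
rewrite (ltn_predK k_gt0) ltnn k_neq_pred /= andbF.
by case: starts_with.
Qed.

Fixpoint pell_strings (n : nat) : seq (seq nat) :=
  if n is m.+1 then
    [seq a :: w | a <- iota 0 k, w <- pell_strings m]
    ++ (if m is m'.+1 then [seq [:: k, k & w] | w <- pell_strings m'] else [::])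
  else [:: [::]].

Lemma pell_stringsS n :
  pell_strings n.+1 =
  [seq a :: w | a <- iota 0 k, w <- pell_strings n]
  ++ (if n is m.+1 then [seq [:: k, k & w] | w <- pell_strings m] else [::]).
Proof. by []. Qed.

Lemma sum_pell_stringsSS (F : seq nat -> nat) n :
  \sum_(s <- pell_strings n.+2) F s =
  \sum_(s <- [seq a :: w | a <- iota 0 k, w <- pell_strings n.+1]) F s
  + \sum_(w <- pell_strings n) F [:: k, k & w].
Proof. by rewrite pell_stringsS big_cat big_map. Qed.

Lemma mem_pell_strings n s : (s \in pell_strings n) = is_pell k s && (size s == n).
Proof.
elim/ltn_ind: n s => -[|n] IH [|a s] //=; rewrite ?andbF // mem_cat mem_allpairs_cons.
  by case: n {IH} => //= n; apply/negbTE/mapP => -[].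
rewrite mem_iota add0n IH //; case: ltnP => [lt_a|le_a] /=.
  by case: n {IH} => [|n]; rewrite ?in_nil ?orbF //= mem_map_cons2 (ltn_eqF lt_a) orbF.
case: eqP => [-> | ne]; last first.
  by case: n {IH} => [|n] //=; rewrite mem_map_cons2; case: eqP.
case: n IH s => [|n] IH [|b s] //=; rewrite ?andbF // mem_map_cons2 eqxx mem_map_cons //=.
by rewrite IH // eqSS andbA.
Qed.

Lemma uniq_pell_strings n : uniq (pell_strings n).
Proof.
elim/ltn_ind: n => -[|n] IH //=.
rewrite cat_uniq allpairs_uniq ?iota_uniq ?IH //; last by move=> [a w] [b v] _ _ [-> ->].
case: n IH => [|n] IH //=; rewrite map_inj_uniq ?IH ?andbT //; last by move=> v w [].
by apply/hasPn => _ /mapP[w _ ->]; rewrite mem_allpairs_cons mem_iota ltnn andbF.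
Qed.

Lemma size_pell_strings n : size (pell_strings n) = kfib k n.+1.
Proof.
elim/ltn_ind: n => -[|n] IH //; rewrite kfibSS /= size_cat size_allpairs size_iota IH //.
by case: n IH => [|n] IH //=; rewrite size_map IH.
Qed.

Lemma sum_iota_pred (F : nat -> nat) :
  \sum_(a <- iota 0 k) F a = \sum_(a <- iota 0 k.-1) F a + F k.-1.
Proof. by rewrite -{1}(ltn_predK k_gt0) -addn1 iotaD big_cat big_seq1. Qed.

Lemma sum_iota_succ_lt : \sum_(a <- iota 0 k) (a.+1 < k) = k.-1.
Proof.
rewrite sum_iota_pred (ltn_predK k_gt0) ltnn addn0 -[RHS](size_iota 0) -sum1_size.
rewrite big_seq [RHS]big_seq; apply: eq_bigr => a; rewrite mem_iota => lt_a.
by rewrite (_ : a.+1 < k); lia.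
Qed.

Lemma sum_iota_eq_pred : \sum_(a <- iota 0 k) (a == k.-1) = 1.
Proof.
rewrite sum_iota_pred eqxx big_seq big1 // => a; rewrite mem_iota => lt_a.
by rewrite ltn_eqF //; lia.
Qed.

Lemma sum_starts_with_letters (L : seq (seq nat)) :
  \sum_(s <- [seq a :: w | a <- iota 0 k, w <- L]) starts_with k.-1 s = size L.
Proof.
rewrite big_allpairs_dep /=.
under eq_bigr => a _ do rewrite big_const_seq count_predT iter_addn_0.
by rewrite -big_distrl /= sum_iota_eq_pred mul1n.
Qed.

Lemma sum_starts_with_pell_strings n :
  \sum_(s <- pell_strings n) starts_with k.-1 s = kfib k n.
Proof.
case: n => [|n]; first by rewrite big_seq1.
rewrite pell_stringsS big_cat [in LHS]/= sum_starts_with_letters size_pell_strings.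
case: n => [|n]; first by rewrite big_nil addn0.
by rewrite big_map big1 ?addn0 // => w _; rewrite /= k_neq_pred.
Qed.

Lemma sum_up_moves_letters (L : seq (seq nat)) :
  \sum_(s <- [seq a :: w | a <- iota 0 k, w <- L]) size (up_moves s) =
  k * \sum_(w <- L) size (up_moves w) + k.-1 * size L
  + \sum_(w <- L) starts_with k.-1 w.
Proof.
rewrite big_allpairs_dep /=.
under eq_bigr => a _.
  under eq_bigr => w _ do rewrite size_up_moves_cons -mulnb.
  rewrite !big_split /= big_const_seq count_predT iter_addn_0 -big_distrr /=.
  over.
rewrite !big_split /= big_const_seq count_predT iter_addn_0 size_iota.
by rewrite -!big_distrl /= sum_iota_succ_lt sum_iota_eq_pred mul1n mulnC.
Qed.

Definition up_move_count (n : nat) : nat := \sum_(s <- pell_strings n) size (up_moves s).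

Lemma up_move_count0 : up_move_count 0 = 0.
Proof. by rewrite /up_move_count big_seq1. Qed.

Lemma up_move_count1 : up_move_count 1 = k.-1.
Proof.
rewrite /up_move_count pell_stringsS cats0 sum_up_moves_letters !big_seq1 /=.
by rewrite muln1 muln0 addn0.
Qed.

Lemma up_move_countSS n :
  up_move_count n.+2 =
  k * up_move_count n.+1 + up_move_count n + k.-1 * kfib k n.+2 + kfib k n.+1.
Proof.
have up_moves_kk w : size (up_moves [:: k, k & w]) = size (up_moves w).
  by rewrite !size_up_moves_cons k_neq_pred ltnNge leqnSn /= !addn0.
rewrite /up_move_count (sum_pell_stringsSS (fun s => size (up_moves s))).
rewrite sum_up_moves_letters.
under [X in _ + X]eq_bigr => w _ do rewrite up_moves_kk.
rewrite size_pell_strings sum_starts_with_pell_strings.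
lia.
Qed.

End PellStrings.

Definition kfib_conv (k : nat) (b : nat -> nat) (n : nat) : nat :=
  \sum_(0 <= i < n.+1) kfib k i * b (n - i).

Lemma kfib_convSS k b n :
  kfib_conv k b n.+2 = k * kfib_conv k b n.+1 + kfib_conv k b n + b n.+1.
Proof.
have shift m : kfib_conv k b m.+1 = \sum_(0 <= i < m.+1) kfib k i.+1 * b (m - i).
  by rewrite /kfib_conv big_nat_recl //=.
rewrite !shift big_nat_recl // -[kfib k 1]/1 mul1n subn0.
under eq_bigr => i _ do rewrite subSS kfibSS mulnDl -mulnA.
by rewrite big_split -big_distrr /kfib_conv addnC.
Qed.

Lemma kfibSS_sub k n : 0 < k -> kfib k n.+2 - kfib k n.+1 = k.-1 * kfib k n.+1 + kfib k n.
Proof. by move=> k_gt0; rewrite kfibSS -{1}(ltn_predK k_gt0) mulSn -addnA addKn. Qed.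

Lemma up_move_count_conv k n : 0 < k ->
  up_move_count k n = kfib_conv k (fun m => kfib k m.+2 - kfib k m.+1) n.
Proof.
move=> k_gt0; set b := fun m => _.
suff: up_move_count k n = kfib_conv k b n /\ up_move_count k n.+1 = kfib_conv k b n.+1.
  by case.
elim: n => [|n [IH0 IH1]]; split => //.
- by rewrite up_move_count0 /kfib_conv big_nat1.
- rewrite up_move_count1 // /kfib_conv big_nat_recr //= big_nat1.
  by rewrite mul0n add0n mul1n subnn /b kfibSS_sub // muln1 addn0.
by rewrite up_move_countSS // kfib_convSS -IH0 -IH1 /b kfibSS_sub // !addnA.
Qed.

Section Tuples.
Variables k n : nat.
Hypothesis k_gt0 : 0 < k.

Local Notation word := (n.-tuple 'I_k.+1).

Lemma pell_word_inj : injective (@pell_word k n).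
Proof. by move=> x y /(inj_map val_inj) /val_inj. Qed.

Lemma size_pell_word (x : word) : size (pell_word x) = n.
Proof. by rewrite size_map size_tuple. Qed.

Definition up_pairs : {set word * word} :=
  [set p | [&& is_pell k (pell_word p.1), is_pell k (pell_word p.2)
             & pell_up k (pell_word p.1) (pell_word p.2)]].

Lemma pell_edgesE : pell_edges k n = [set [set p.1; p.2] | p in up_pairs].
Proof.
apply/setP => E; apply/imset2P/imsetP => [[x y] | [[x y]]].
  rewrite !inE => px /andP[py]; rewrite pell_adj_up => /and3P[_ _ /orP[xy|yx]] ->.
    by exists (x, y); rewrite // inE px py.
  by exists (y, x); [rewrite inE px py | rewrite setUC].
rewrite inE => /and3P[px py xy] ->.
by apply: (Imset2spec (x1 := x) (x2 := y)); rewrite // !inE ?py // pell_adj_up px py xy.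
Qed.

Lemma card_pell_edges : #|pell_edges k n| = #|up_pairs|.
Proof.
rewrite pell_edgesE card_in_imset // => -[x y] [x' y']; rewrite !inE /=.
move=> /and3P[_ _ xy] /and3P[_ _ xy'] /setP eq_xy.
have := eq_xy x; have := eq_xy y; rewrite !inE !eqxx orbT /=.
move=> /esym/orP[]/eqP y_eq /esym/orP[]/eqP x_eq; subst => //.
all: by rewrite ?pell_up_irr ?(pell_up_asym k_gt0 xy') in xy.
Qed.

Definition tuple_of_word (s : seq nat) : word :=
  insubd (nseq_tuple n ord0) (map inord s).

Lemma tuple_of_wordK s :
  size s = n -> all (fun x => x <= k) s -> pell_word (tuple_of_word s) = s.
Proof.
move=> size_s le_s; rewrite /pell_word insubdK; last by rewrite unfold_in size_map size_s.
by rewrite -map_comp map_id_in // => x /(allP le_s) /= le_x; rewrite inordK.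
Qed.

Lemma card_up_pairs : #|up_pairs| = up_move_count k n.
Proof.
have -> : up_move_count k n =
          size [seq (s, t) | s <- pell_strings k n, t <- up_moves k s].
  by rewrite size_allpairs_dep sumnE big_map.
rewrite cardE -(size_map (fun p => (pell_word p.1, pell_word p.2))).
apply/perm_size/uniq_perm.
- rewrite map_inj_uniq ?enum_uniq // => -[x y] [x' y'] /=.
  by case=> /pell_word_inj -> /pell_word_inj ->.
- apply: allpairs_uniq_dep => [||[s t] [s' t'] _ _ /= [-> ->]] //.
  + exact: uniq_pell_strings.
  + by move=> s _; exact: uniq_up_moves.
move=> [s t]; apply/mapP/allpairsPdep => [[[x y]]|[s' [t' [s's t't [-> ->]]]]].
  rewrite mem_enum inE /= => /and3P[px py xy] [-> ->].
  exists (pell_word x), (pell_word y); rewrite mem_up_moves // mem_pell_strings // px.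
  by split=> //; rewrite size_pell_word eqxx.
move: s's t't; rewrite mem_pell_strings // mem_up_moves // => /andP[ps /eqP size_s] st.
have pt := pell_up_is_pell k_gt0 ps st.
have size_t : size t' = n by rewrite -(pell_up_size st).
exists (tuple_of_word s', tuple_of_word t');
  by rewrite ?mem_enum ?inE /= !tuple_of_wordK ?pell_letters_le ?ps ?pt.
Qed.

End Tuples.

Theorem proposition3p2 (k n : nat) : 2 <= k ->
  #|pell_edges k n| =
  \sum_(0 <= i < n.+1) kfib k i * (kfib k (n - i).+2 - kfib k (n - i).+1).
Proof.
move=> k_ge2; have k_gt0 := ltnW k_ge2.
by rewrite card_pell_edges // card_up_pairs // up_move_count_conv.
Qed.
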